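(* Let $E$ and $E^c=\partial\overline{\mathcal{G}}\setminus E$ be nonempty clopen subsets of $\partial\overline{\mathcal{G}}$. Let $f:\overline{\mathcal{G}}\to\mathbb{R}$ be harmonic with $f(x)=C\ge 0$ for $x\in E$ and $f(x)>C$ for $x\in E^c$. Let $\epsilon>0$ be such that $N_\epsilon(E)$ has finite volume. Let $t$ be a regular value of $f$ with $C<t<\min_{x\in E^c}f(x)$ and $\{x: f(x)\le t\}\subset N_\epsilon(E)$. Then every $x\in\mathcal{G}$ with $f(x)=t$ can be connected to $\partial\overline{\mathcal{G}}$ by a path $\gamma$ lying in the set $\{f\le t\}$, and $\gamma$ can be chosen to have a single limit point in $\partial\overline{\mathcal{G}}$.
   Context: $\mathcal{G}$ is a connected, locally finite metric graph with countable vertex set and countable edge set. Each edge has a positive length and is identified with an interval. $\mathcal{G}$ carries the geodesic distance $d$, and $\overline{\mathcal{G}}$ is its metric completion. A designated set of vertices, containing all vertices of degree $1$, forms the boundary vertices. $\mathcal{G}_{int}$ is $\mathcal{G}$ minus the boundary vertices, and $\partial\overline{\mathcal{G}}=\overline{\mathcal{G}}\setminus\mathcal{G}_{int}$. Standing assumptions: $\overline{\mathcal{G}}$ is compact and $\partial\overline{\mathcal{G}}$ is totally disconnected. Clopen means open and closed in $\partial\overline{\mathcal{G}}$. $N_\epsilon(E)$ is the union of open balls of radius $\epsilon$ about points of $E$, and its volume is the Lebesgue measure of its intersection with the edges. A function $f:\overline{\mathcal{G}}\to\mathbb{R}$ is harmonic if it is continuous, linear on each edge, and satisfies $\sum_{e\sim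 v}\partial_\nu f_e(v)=0$ at every interior vertex $v$, where $\partial_\nu f_e(v)$ is the derivative of $f_e$ at $v$ in the direction from $v$ into $e$. A point $x\in\mathcal{G}$ is a critical point of $f$ if $x$ is a vertex or $f'(x)=0$. A number $c$ is a critical value if $f^{-1}(c)$ contains a critical point. Values in the range of $f$ that are not critical values are regular values. A path may be finite (traversing finitely many edges) or infinite: $\gamma:[0,L)\to\mathcal{G}$ traversing an infinite sequence of successively adjacent edges with total length $L<\infty$. Its limit points are the limits in $\overline{\mathcal{G}}$ of $\gamma(s_k)$ as $s_k\to L$. *)

From Stdlib Require Import Reals List.
From mathcomp Require Import all_boot all_algebra.
From mathcomp Require Import classical_sets reals ereal Rstruct lebesgue_measure.

(* Edge e is identified with the
   interval [0, len e], coordinate 0 at [src e], coordinate [len e] at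
   [tgt e]. *)
Record MGraph := {
  V : Type;
  Ed : Type;
  src : Ed -> V;
  tgt : Ed -> V;
  len : Ed -> R;
  Bd : V -> Prop
}.

Arguments src {m} _.
Arguments tgt {m} _.
Arguments len {m} _.

Set Implicit Arguments.
Unset Strict Implicit.

Section MetricGraph.
Variable G : MGraph.

Local Open Scope R_scope.

Definition endpt (e : Ed G) (b : bool) : V G := if b then src e else tgt e.

Definition Pt : Type :=
  (V G + { p : Ed G * R | 0 < snd p < len (fst p) })%type.

Definition on_edge (e : Ed G) (x : Pt) (c : R) : Prop :=
  (x = inl (src e) /\ c = 0) \/
  (x = inl (tgt e) /\ c = len e) \/
  (exists p, x = inr p /\ fst (proj1_sig p) = e /\ snd (proj1_sig p) = c).

(* the point of (closed) edge e at coordinate s (clamped to [0, len e]) *)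
Definition edge_pt (e : Ed G) (s : R) : Pt :=
  match Rle_dec s 0 with
  | left _ => inl (src e)
  | right h1 =>
    match Rle_dec (len e) s with
    | left _ => inl (tgt e)
    | right h2 =>
        inr (exist (fun p : Ed G * R => 0 < snd p < len (fst p)) (e, s)
               (conj (Rnot_le_lt _ _ h1) (Rnot_le_lt _ _ h2)))
    end
  end.

Definition pos_lengths : Prop := forall e : Ed G, 0 < len e.

Definition countable_type (T : Type) : Prop :=
  exists g : T -> nat, forall x y, g x = g y -> x = y.

Definition countable_graph : Prop := countable_type (V G) /\ countable_type (Ed G).

Definition locally_finite : Prop :=
  forall v : V G, exists l : list (Ed G * bool),
    forall e b, In (e, b) l <-> endpt e b = v.

Definition adjacent (u w : V G) : Prop := exists e : Ed G, src e = u /\ tgt e = w.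

Definition connected_graph : Prop :=
  forall u w : V G, Relation_Operators.clos_refl_sym_trans (V G) adjacent u w.

Definition degree_one (v : V G) : Prop :=
  exists (e : Ed G) b, forall (e' : Ed G) b', endpt e' b' = v <-> (e', b') = (e, b).

Definition Bd_contains_leaves : Prop := forall v, degree_one v -> Bd G v.

Inductive chain : Pt -> Pt -> R -> Prop :=
| chain_nil x : chain x x 0
| chain_cons x y z e a b c :
    on_edge e x a -> on_edge e y b -> chain y z c ->
    chain x z (Rabs (a - b) + c).

(* geodesic distance: d x y < r  (d = infimum of lengths of such paths) *)
Definition dlt (x y : Pt) (r : R) : Prop := exists c, chain x y c /\ c < r.

(* Points of the completion are represented by Cauchy sequences in (G,d);
   two of them represent the same point iff their distance D is 0. *)
Definition Gbar := nat -> Pt.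

Definition IsCS (u : Gbar) : Prop :=
  forall eps, 0 < eps -> exists N, forall m n, (N <= m)%nat -> (N <= n)%nat ->
    dlt (u m) (u n) eps.

(* D u v < r,  where D u v = lim_n d (u n) (v n) is the completion metric *)
Definition Dlt (u v : Gbar) (r : R) : Prop :=
  exists r', r' < r /\ exists N, forall n, (N <= n)%nat -> dlt (u n) (v n) r'.

Definition Deq0 (u v : Gbar) : Prop := forall eps, 0 < eps -> Dlt u v eps.

Definition emb (x : Pt) : Gbar := fun _ => x.

Definition Gint (x : Pt) : Prop :=
  match x with inl v => ~ Bd G v | inr _ => True end.

Definition bdry (u : Gbar) : Prop :=
  IsCS u /\ ~ (exists x, Gint x /\ Deq0 u (emb x)).

Definition open_Gbar (U : Gbar -> Prop) : Prop :=
  forall u, IsCS u -> U u -> exists r, 0 < r /\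
    forall v, IsCS v -> Dlt u v r -> U v.

Definition compact_Gbar : Prop :=
  forall (I : Type) (U : I -> Gbar -> Prop),
    (forall i, open_Gbar (U i)) ->
    (forall u, IsCS u -> exists i, U i u) ->
    exists l : list I, forall u, IsCS u -> exists i, In i l /\ U i u.

Definition connected_set (A : Gbar -> Prop) : Prop :=
  forall U W, open_Gbar U -> open_Gbar W ->
    (forall u, A u -> U u \/ W u) ->
    (forall u, A u -> U u -> W u -> False) ->
    (exists u, A u /\ U u) -> (exists u, A u /\ W u) -> False.

Definition bdry_totally_disconnected : Prop :=
  forall A : Gbar -> Prop, (forall u, A u -> bdry u) -> connected_set A ->
    forall u v, A u -> A v -> Deq0 u v.

(* sets of points of Gbar must be invariant under the identification D = 0 *)
Definition saturated (A : Gbar -> Prop) : Prop :=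
  forall u v, IsCS u -> IsCS v -> Deq0 u v -> A u -> A v.

Definition open_in_bdry (A : Gbar -> Prop) : Prop :=
  forall u, A u -> exists r, 0 < r /\ forall v, bdry v -> Dlt u v r -> A v.

Definition clopen_bdry (A : Gbar -> Prop) : Prop :=
  saturated A /\ (forall u, A u -> bdry u) /\ open_in_bdry A /\
  open_in_bdry (fun u => bdry u /\ ~ A u).

Definition continuous_Gbar (f : Gbar -> R) : Prop :=
  forall u, IsCS u -> forall eps, 0 < eps -> exists delta, 0 < delta /\
    forall v, IsCS v -> Dlt u v delta -> Rabs (f u - f v) < eps.

Definition f_edge (f : Gbar -> R) (e : Ed G) (s : R) : R := f (emb (edge_pt e s)).

Definition linear_on_edges (f : Gbar -> R) : Prop :=
  forall e : Ed G, exists a b, forall s, 0 <= s <= len e -> f_edge f e s = a + b * s.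

Definition edge_slope (f : Gbar -> R) (e : Ed G) : R :=
  (f_edge f e (len e) - f_edge f e 0) / len e.

(* d_nu f_e(v) at the end (e,b) of e, in the direction from v into e:
   slope at the tail, minus the slope at the head. *)
Definition dnu (f : Gbar -> R) (e : Ed G) (b : bool) : R :=
  if b then edge_slope f e else - edge_slope f e.

Fixpoint sum_dnu (f : Gbar -> R) (l : list (Ed G * bool)) : R :=
  match l with
  | nil => 0
  | (e, b) :: l' => dnu f e b + sum_dnu f l'
  end.

(* Kirchhoff condition at every interior vertex; the sum runs over all
   edge-ends at v (a loop at v contributes both of its ends). *)
Definition kirchhoff (f : Gbar -> R) : Prop :=
  forall v : V G, ~ Bd G v ->
    forall l : list (Ed G * bool), NoDup l ->
      (forall e b, In (e, b) l <-> endpt e b = v) ->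
      sum_dnu f l = 0.

Definition harmonic (f : Gbar -> R) : Prop :=
  continuous_Gbar f /\ linear_on_edges f /\ kirchhoff f.

Definition critical_point (f : Gbar -> R) (x : Pt) : Prop :=
  match x with
  | inl _ => True
  | inr p => derivable_pt_lim (f_edge f (fst (proj1_sig p))) (snd (proj1_sig p)) 0
  end.

Definition critical_value (f : Gbar -> R) (c : R) : Prop :=
  exists x, critical_point f x /\ f (emb x) = c.

Definition regular_value (f : Gbar -> R) (t : R) : Prop :=
  (exists u, IsCS u /\ f u = t) /\ ~ critical_value f t.

Definition Neps (E : Gbar -> Prop) (eps : R) (u : Gbar) : Prop :=
  IsCS u /\ exists p, E p /\ Dlt p u eps.

Definition edge_trace (A : Gbar -> Prop) (e : Ed G) : set R :=
  [set s | 0 < s < len e /\ A (emb (edge_pt e s))].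

Local Close Scope R_scope.
Local Open Scope ereal_scope.
(* finite volume: the (countable) sum over edges of the Lebesgue measures of
   the traces is finite, i.e. all its finite partial sums are bounded. *)
Definition finite_volume (A : Gbar -> Prop) : Prop :=
  exists M : R, forall l : list (Ed G), NoDup l ->
    \sum_(e <- l) (@lebesgue_measure R (edge_trace A e)) <= M%:E.
Local Close Scope ereal_scope.
Local Open Scope R_scope.

(* gamma : [0,L) -> G is a (finite or infinite) path starting at x, of total
   length L: it is cut at break points 0 = b 0 <= b 1 <= ... into pieces; on
   [b k, b (k+1)] it moves at unit speed inside the closed edge [e k].
   Either finitely many pieces (b k = L eventually) or infinitely many
   (b k < L, b k -> L). *)
Definition is_path (x : Pt) (gamma : R -> Pt) (L : R) : Prop :=
  0 < L /\ gamma 0 = x /\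
  exists (b : nat -> R) (e : nat -> Ed G) (c sg : nat -> R),
    b 0%nat = 0 /\ (forall k, b k <= b (S k)) /\
    ((exists n, forall k, (n <= k)%nat -> b k = L) \/
     ((forall k, b k < L) /\ Un_cv b L)) /\
    (forall k, (sg k = 1 \/ sg k = -1) /\
       forall s, b k <= s <= b (S k) -> s < L ->
         on_edge (e k) (gamma s) (c k + sg k * (s - b k))).

Definition path_limpt (gamma : R -> Pt) (L : R) (p : Gbar) : Prop :=
  IsCS p /\
  exists sq : nat -> R, (forall k, 0 <= sq k < L) /\ Un_cv sq L /\
    forall eps, 0 < eps -> exists N, forall k, (N <= k)%nat ->
      Dlt (emb (gamma (sq k))) p eps.

End MetricGraph.

(* Since t is a regular value, x lies inside an edge on which f has nonzero
   slope; walk along that edge in the direction in which f decreases, down to a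
   vertex.  At an interior vertex entered downhill, Kirchhoff's law provides an
   edge along which f decreases further.  Following such edges gives a walk on
   which f stays below t and the vertex values strictly decrease, so its edges
   are pairwise distinct.  If the walk never reaches a boundary vertex, these
   edges lie in the sublevel set {f <= t}, contained in N_eps(E) of finite
   volume, so the total length is finite.  The visited vertices then form a
   Cauchy sequence whose limit is the unique limit point of the path; it is a
   boundary point because an interior point has no vertex other than itself
   nearby, while the walk never rests at an interior vertex. *)

From Stdlib Require Import Reals List Lra Lia ClassicalEpsilon.
From mathcomp Require Import zify.
From mathcomp Require Import all_boot all_algebra.
From mathcomp Require Import boolp classical_sets reals ereal Rstruct lebesgue_measure.
Local Open Scope R_scope.
Set Implicit Arguments.
Unset Strict Implicit.

Section Chains.
Variable G : MGraph.

Lemma chain_eq_len (x y : Pt G) c c' : chain x y c -> c = c' -> chain x y c'.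
Proof. intros H ->; exact H. Qed.

Lemma chain_trans (x y z : Pt G) c1 c2 :
  chain x y c1 -> chain y z c2 -> chain x z (c1 + c2).
Proof.
  intros H; revert z c2.
  induction H as [x|x y z' e a b c Ha Hb Hc IH]; intros z2 c2 H2.
  - apply (chain_eq_len H2). ring.
  - apply (chain_eq_len (chain_cons Ha Hb (IH _ _ H2))). ring.
Qed.

Lemma chain_edge (x y : Pt G) (e : Ed G) a b :
  on_edge e x a -> on_edge e y b -> chain x y (Rabs (a - b)).
Proof. intros Ha Hb. apply (chain_eq_len (chain_cons Ha Hb (chain_nil y))). ring. Qed.

Lemma chain_sym (x y : Pt G) c : chain x y c -> chain y x c.
Proof.
  induction 1 as [x|x y z' e a b c Ha Hb Hc IH]; [apply chain_nil|].
  apply (chain_eq_len (chain_trans IH (chain_edge Hb Ha))).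
  rewrite Rabs_minus_sym. ring.
Qed.

Lemma chain_dlt_trans (x y z : Pt G) c a r :
  chain x y c -> c <= a -> dlt y z r -> dlt x z (a + r).
Proof. intros H1 H2 [c' [H3 H4]]. exists (c + c'). split; [exact (chain_trans H1 H3)|lra]. Qed.

Lemma emb_IsCS (x : Pt G) : IsCS (emb x).
Proof.
  intros eps Heps. exists 0%nat. intros m n _ _.
  exists 0. split; [apply chain_nil|exact Heps].
Qed.

Definition endpt_coord (e : Ed G) (b : bool) : R := if b then 0 else len e.

Lemma on_edge_endpt (e : Ed G) b : on_edge e (inl (endpt e b)) (endpt_coord e b).
Proof. destruct b; [left | right; left]; split; reflexivity. Qed.

Lemma on_edge_coord_eq (e : Ed G) z c c' : on_edge e z c -> c = c' -> on_edge e z c'.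
Proof. intros H ->; exact H. Qed.

Lemma on_edge_edge_pt (e : Ed G) c : 0 <= c <= len e -> on_edge e (edge_pt e c) c.
Proof.
  intros Hc. unfold edge_pt.
  destruct (Rle_dec c 0); [left; split; [reflexivity|lra]|].
  destruct (Rle_dec (len e) c); [right; left; split; [reflexivity|lra]|].
  right; right. eexists. split; [reflexivity|split; reflexivity].
Qed.

Lemma edge_pt_inr (p : {p : Ed G * R | 0 < snd p < len (fst p)}) :
  edge_pt (fst (proj1_sig p)) (snd (proj1_sig p)) = inr p.
Proof.
  destruct p as [[e s] H]. simpl in *. unfold edge_pt.
  destruct (Rle_dec s 0); [exfalso; lra|].
  destruct (Rle_dec (len e) s); [exfalso; lra|].
  f_equal. apply eq_sig_hprop; [intros; apply Prop_irrelevance|reflexivity].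
Qed.

Hypothesis Hlen : pos_lengths G.

Lemma edge_pt_0 (e : Ed G) : edge_pt e 0 = inl (src e).
Proof. unfold edge_pt. destruct (Rle_dec 0 0); [reflexivity|exfalso; lra]. Qed.

Lemma edge_pt_len (e : Ed G) : edge_pt e (len e) = inl (tgt e).
Proof.
  pose proof (Hlen e). unfold edge_pt.
  destruct (Rle_dec (len e) 0); [exfalso; lra|].
  destruct (Rle_dec (len e) (len e)); [reflexivity|exfalso; lra].
Qed.

Lemma edge_pt_on_edge (e : Ed G) z c : on_edge e z c -> edge_pt e c = z.
Proof.
  intros [[-> ->]|[[-> ->]|[q [-> [<- <-]]]]].
  - apply edge_pt_0.
  - apply edge_pt_len.
  - apply edge_pt_inr.
Qed.

End Chains.

Section Isolation.
Variable G : MGraph.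
Hypothesis Hlen : pos_lengths G.
Hypothesis Hlf : locally_finite G.

Lemma chain_lipschitz (phi : Pt G -> R) (h : Ed G -> R -> R) :
  (forall e z c, on_edge e z c -> phi z = h e c) ->
  (forall e a b, Rabs (h e a - h e b) <= Rabs (a - b)) ->
  forall x z c, chain x z c -> Rabs (phi x - phi z) <= c.
Proof.
  intros Hon Hlip x z c H.
  induction H as [x|x y z' e a b c Ha Hb Hc IH].
  - rewrite Rminus_diag Rabs_R0. lra.
  - rewrite (Hon _ _ _ Ha). rewrite (Hon _ _ _ Hb) in IH.
    pose proof (Hlip e a b).
    pose proof (Rabs_triang (h e a - h e b) (h e b - phi z')).
    replace (h e a - phi z') with ((h e a - h e b) + (h e b - phi z')) by ring. lra.
Qed.

Lemma Rabs_Rmin_le a b a' b' d : Rabs (a - a') <= d -> Rabs (b - b') <= d ->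
  Rabs (Rmin a b - Rmin a' b') <= d.
Proof.
  unfold Rmin. intros H1 H2.
  destruct (Rle_dec a b); destruct (Rle_dec a' b');
  revert H1 H2; unfold Rabs; repeat destruct Rcase_abs; intros; lra.
Qed.

Lemma Rabs_diag_le a d : 0 <= d -> Rabs (a - a) <= d.
Proof. rewrite Rminus_diag Rabs_R0. lra. Qed.

Lemma ends_min_len (v : V G) :
  exists r, 0 < r /\ forall e b, endpt e b = v -> r <= len e.
Proof.
  destruct (Hlf v) as [l Hl].
  enough (H : exists r, 0 < r /\ forall eb, In eb l -> r <= len (fst eb)).
  { destruct H as [r [Hr H]]. exists r. split; [exact Hr|].
    intros e b Heb. apply (H (e, b)). apply Hl. exact Heb. }
  clear Hl. induction l as [|[e b] l [r [Hr H]]].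
  - exists 1. split; [lra|]. intros eb [].
  - exists (Rmin r (len e)). pose proof (Hlen e).
    split; [apply Rmin_glb_lt; lra|].
    intros eb [<-|Hin]; [apply Rmin_r|].
    pose proof (H eb Hin). pose proof (Rmin_l r (len e)). lra.
Qed.

(* The potential is min(r, d(., v)), computed edge by edge; r is below the
   length of every edge at v. *)
Lemma vertex_isolated (v : V G) :
  exists r, 0 < r /\ forall v' c, chain (inl v') (inl v) c -> c < r -> v' = v.
Proof.
  destruct (ends_min_len v) as [r [Hr Hre]].
  set (h := fun e c => Rmin r (Rmin (if `[< src e = v >] then c else r)
                                    (if `[< tgt e = v >] then len e - c else r))).
  set (phi := fun z : Pt G => match z with
               | inl u => if `[< u = v >] then 0 else r
               | inr q => h (fst (proj1_sig q)) (snd (proj1_sig q)) end).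
  assert (Hon : forall e z c, on_edge e z c -> phi z = h e c).
  { intros e z c [[-> ->]|[[-> ->]|[q [-> [<- <-]]]]]; [| |reflexivity];
      pose proof (Hlen e); unfold phi, h;
      destruct (pselect (src e = v)) as [Hs|Hs];
      [rewrite (asboolT Hs); pose proof (Hre e true Hs)|rewrite (asboolF Hs)|
       rewrite (asboolT Hs); pose proof (Hre e true Hs)|rewrite (asboolF Hs)];
      destruct (pselect (tgt e = v)) as [Ht|Ht];
      (rewrite (asboolT Ht); pose proof (Hre e false Ht)) || rewrite (asboolF Ht);
      unfold Rmin; repeat destruct Rle_dec; lra. }
  assert (Hlip : forall e a b, Rabs (h e a - h e b) <= Rabs (a - b)).
  { intros e a b. unfold h. pose proof (Rabs_pos (a - b)).
    apply Rabs_Rmin_le; [apply Rabs_diag_le; lra|apply Rabs_Rmin_le].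
    - destruct `[< src e = v >]; [lra|apply Rabs_diag_le; lra].
    - destruct `[< tgt e = v >]; [|apply Rabs_diag_le; lra].
      replace (len e - a - (len e - b)) with (- (a - b)) by ring.
      rewrite Rabs_Ropp. lra. }
  exists r. split; [exact Hr|]. intros v' c Hc Hcr.
  pose proof (chain_lipschitz Hon Hlip Hc) as Hb. simpl in Hb.
  rewrite (asboolT (erefl v)) in Hb.
  destruct (pselect (v' = v)) as [E|E]; [exact E|].
  rewrite (asboolF E) Rminus_0_r Rabs_right in Hb; lra.
Qed.

Lemma edge_interior_isolated (p : {p : Ed G * R | 0 < snd p < len (fst p)}) :
  exists r, 0 < r /\ forall v c, chain (inl v) (inr p) c -> c < r -> False.
Proof.
  destruct p as [[e0 s0] Hp]. simpl in Hp.
  set (r := Rmin s0 (len e0 - s0)).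
  assert (Hr : 0 < r) by (apply Rmin_glb_lt; lra).
  assert (Hr1 : r <= s0) by apply Rmin_l.
  assert (Hr2 : r <= len e0 - s0) by apply Rmin_r.
  set (h := fun e c => if `[< e = e0 >] then Rmin r (Rabs (c - s0)) else r).
  set (phi := fun z : Pt G => match z with
               | inl _ => r
               | inr q => h (fst (proj1_sig q)) (snd (proj1_sig q)) end).
  assert (Hon : forall e z c, on_edge e z c -> phi z = h e c).
  { intros e z c [[-> ->]|[[-> ->]|[q [-> [<- <-]]]]]; [| |reflexivity];
      unfold phi, h; destruct (pselect (e = e0)) as [->|E];
      rewrite ?(asboolT (erefl e0)) ?(asboolF E) //;
      [rewrite Rabs_left|rewrite Rabs_right]; unfold Rmin; repeat destruct Rle_dec; lra. }
  assert (Hlip : forall e a b, Rabs (h e a - h e b) <= Rabs (a - b)).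
  { intros e a b. unfold h. pose proof (Rabs_pos (a - b)).
    destruct `[< e = e0 >]; [|apply Rabs_diag_le; lra].
    apply Rabs_Rmin_le; [apply Rabs_diag_le; lra|].
    pose proof (Rabs_triang_inv (a - s0) (b - s0)) as T1.
    pose proof (Rabs_triang_inv (b - s0) (a - s0)) as T2.
    replace (a - s0 - (b - s0)) with (a - b) in T1 by ring.
    replace (b - s0 - (a - s0)) with (- (a - b)) in T2 by ring.
    rewrite Rabs_Ropp in T2. unfold Rabs at 1; destruct Rcase_abs; lra. }
  exists r. split; [exact Hr|]. intros v c Hc Hcr.
  pose proof (chain_lipschitz Hon Hlip Hc) as Hb. simpl in Hb.
  unfold h in Hb. simpl in Hb. rewrite (asboolT (erefl e0)) Rminus_diag Rabs_R0 in Hb.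
  unfold Rmin in Hb. destruct Rle_dec in Hb; [lra|].
  rewrite Rminus_0_r Rabs_right in Hb; lra.
Qed.

Lemma near_vertices_eq (y : Pt G) :
  exists r, 0 < r /\ forall v c, chain (inl v) y c -> c < r -> y = inl v.
Proof.
  destruct y as [u|p].
  - destruct (vertex_isolated u) as [r [Hr H]]. exists r. split; [exact Hr|].
    intros v c Hc Hcr. rewrite (H v c Hc Hcr). reflexivity.
  - destruct (edge_interior_isolated p) as [r [Hr H]]. exists r. split; [exact Hr|].
    intros v c Hc Hcr. destruct (H v c Hc Hcr).
Qed.

End Isolation.

Section Harmonic.
Variable G : MGraph.
Hypothesis Hlen : pos_lengths G.
Variable f : Gbar G -> R.
Hypothesis Hf : harmonic f.

Definition fv (v : V G) : R := f (emb (inl v)).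

Lemma edge_slope_fv (e : Ed G) : edge_slope f e = (fv (tgt e) - fv (src e)) / len e.
Proof. unfold edge_slope, f_edge, fv. rewrite edge_pt_0 (edge_pt_len Hlen). reflexivity. Qed.

Lemma f_edge_affine (e : Ed G) s :
  0 <= s <= len e -> f_edge f e s = fv (src e) + edge_slope f e * s.
Proof.
  intros Hs. destruct Hf as [_ [Hlin _]]. destruct (Hlin e) as [a [b Hab]].
  pose proof (Hlen e).
  assert (H0 : f_edge f e 0 = a + b * 0) by (apply Hab; lra).
  assert (H1 : f_edge f e (len e) = a + b * len e) by (apply Hab; lra).
  unfold edge_slope. unfold fv. rewrite <- edge_pt_0. fold (f_edge f e 0).
  rewrite H0 H1 (Hab s Hs). field. lra.
Qed.

Lemma f_edge_le_max (e : Ed G) s : 0 <= s <= len e ->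
  f (emb (edge_pt e s)) <= Rmax (fv (src e)) (fv (tgt e)).
Proof.
  intros Hs. change (f (emb (edge_pt e s))) with (f_edge f e s).
  rewrite (f_edge_affine Hs). pose proof (Hlen e).
  assert (Htgt : fv (tgt e) = fv (src e) + edge_slope f e * len e)
    by (rewrite edge_slope_fv; field; lra).
  pose proof (Rmax_l (fv (src e)) (fv (tgt e))).
  pose proof (Rmax_r (fv (src e)) (fv (tgt e))).
  destruct (Rle_dec 0 (edge_slope f e)); nra.
Qed.

Lemma f_edge_derivable (e : Ed G) s :
  0 < s < len e -> derivable_pt_lim (f_edge f e) s (edge_slope f e).
Proof.
  intros Hs eps Heps.
  assert (Hd : 0 < Rmin s (len e - s)) by (apply Rmin_glb_lt; lra).
  exists (mkposreal _ Hd). intros h Hh Hhd. simpl in Hhd.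
  pose proof (Rmin_l s (len e - s)). pose proof (Rmin_r s (len e - s)).
  assert (Hsh : 0 <= s + h <= len e) by (revert Hhd; unfold Rabs; destruct Rcase_abs; lra).
  assert (Hs' : 0 <= s <= len e) by lra.
  rewrite (f_edge_affine Hsh) (f_edge_affine Hs').
  replace ((fv (src e) + edge_slope f e * (s + h) - (fv (src e) + edge_slope f e * s)) / h
           - edge_slope f e) with 0 by (field; exact Hh).
  rewrite Rabs_R0. exact Heps.
Qed.

Lemma dnu_fv (e : Ed G) b :
  dnu f e b = (fv (endpt e (negb b)) - fv (endpt e b)) / len e.
Proof.
  pose proof (Hlen e). unfold dnu. rewrite edge_slope_fv.
  destruct b; simpl; [reflexivity|field; lra].
Qed.

Lemma dnu_negb (e : Ed G) b : dnu f e (negb b) = - dnu f e b.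
Proof. destruct b; unfold dnu; simpl; ring. Qed.

Lemma sum_dnu_ge0 (l : list (Ed G * bool)) :
  (forall eb, In eb l -> 0 <= dnu f (fst eb) (snd eb)) -> 0 <= sum_dnu f l.
Proof.
  induction l as [|[e b] l IH]; intros Hall; simpl; [lra|].
  pose proof (Hall (e, b) (or_introl erefl)).
  pose proof (IH (fun eb Hin => Hall eb (or_intror Hin))). simpl in *. lra.
Qed.

Lemma sum_dnu_gt0 (l : list (Ed G * bool)) eb0 :
  (forall eb, In eb l -> 0 <= dnu f (fst eb) (snd eb)) -> In eb0 l ->
  0 < dnu f (fst eb0) (snd eb0) -> 0 < sum_dnu f l.
Proof.
  induction l as [|[e b] l IH]; intros Hall Hin Hpos; [destruct Hin|simpl].
  assert (Hl : forall eb, In eb l -> 0 <= dnu f (fst eb) (snd eb))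
    by (intros eb Heb; exact (Hall eb (or_intror Heb))).
  pose proof (Hall (e, b) (or_introl erefl)). pose proof (sum_dnu_ge0 Hl).
  destruct Hin as [<-|Hin]; simpl in *; [lra|].
  pose proof (IH Hl Hin Hpos). lra.
Qed.

Lemma exists_NoDup_same_elements {T : Type} (l : list T) :
  exists l', NoDup l' /\ forall x, In x l' <-> In x l.
Proof.
  induction l as [|a l [l' [Hn Hi]]]; [exists nil; split; [constructor|tauto]|].
  destruct (EM (In a l')) as [Ha|Ha].
  - exists l'. split; [exact Hn|]. intros x. rewrite Hi. simpl.
    split; [tauto|]. intros [<-|H]; [apply Hi; exact Ha|exact H].
  - exists (a :: l'). split; [constructor; assumption|]. intros x. simpl. rewrite Hi. tauto.
Qed.

Hypothesis Hlf : locally_finite G.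

(* Kirchhoff: the outgoing derivatives at an interior vertex sum to 0, so one
   strictly positive term forces a strictly negative one. *)
Lemma exists_descending_end (v : V G) : ~ Bd G v ->
  (exists e b, endpt e b = v /\ 0 < dnu f e b) ->
  exists e b, endpt e b = v /\ dnu f e b < 0.
Proof.
  intros Hv [e0 [b0 [H0 H0p]]]. apply contrapT. intros Hneg.
  destruct (Hlf v) as [l Hl]. destruct (exists_NoDup_same_elements l) as [l' [Hn Hi]].
  destruct Hf as [_ [_ Hk]].
  assert (Hends : forall e b, In (e, b) l' <-> endpt e b = v)
    by (intros e b; rewrite Hi; apply Hl).
  assert (Hz : sum_dnu f l' = 0) by exact (Hk v Hv l' Hn Hends).
  enough (0 < sum_dnu f l') by lra.
  apply (sum_dnu_gt0 (eb0 := (e0, b0))); [|apply Hends; exact H0|exact H0p].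
  intros [e b] Hin. apply Rnot_lt_le. intros Hlt.
  apply Hneg. exists e, b. split; [apply Hends; exact Hin|exact Hlt].
Qed.

End Harmonic.

Definition sublevel_path_to_boundary (G : MGraph) (f : Gbar G -> R) (t : R) (x : Pt G) : Prop :=
  exists (gamma : R -> Pt G) (L : R),
    is_path x gamma L /\
    (forall s, 0 <= s < L -> f (emb (gamma s)) <= t) /\
    exists p : Gbar G, bdry p /\ path_limpt gamma L p /\
      (forall q, path_limpt gamma L q -> Deq0 p q).

Lemma Rabs_sign_mul a x : a = 1 \/ a = -1 -> Rabs (a * x) = Rabs x.
Proof. intros [-> | ->]; unfold Rabs; repeat destruct Rcase_abs; lra. Qed.

Lemma cv_from_below (L : R) : 0 < L ->
  exists sq : nat -> R, (forall k, 0 <= sq k < L) /\ Un_cv sq L.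
Proof.
  intros HL. exists (fun k => L - L / 2 ^ k). split.
  - intros k. pose proof (pow_R1_Rle 2 k ltac:(lra)).
    assert (0 < L / 2 ^ k) by (apply Rdiv_lt_0_compat; lra).
    enough (L / 2 ^ k <= L) by lra.
    apply (Rmult_le_reg_r (2 ^ k)); [lra|]. field_simplify; nra.
  - intros eps Heps. destruct (cv_pow_half L eps Heps) as [N HN]. exists N.
    intros n Hn. specialize (HN n Hn). unfold R_dist in *.
    replace (L - L / 2 ^ n - L) with (- (L / 2 ^ n - 0)) by ring.
    rewrite Rabs_Ropp. exact HN.
Qed.

Lemma lebesgue_measure_oo0 (a : R) : 0 < a ->
  (@lebesgue_measure R [set` `]0%R, a[%R]%classic = a%:E)%E.
Proof.
  intros Ha. rewrite lebesgue_measure_itv /=.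
  have -> : (0%:E < a%:E)%E = true by rewrite lte_fin; apply/RltP.
  rewrite -EFinD GRing.subr0. reflexivity.
Qed.

Lemma edge_trace_full (G : MGraph) (A : Gbar G -> Prop) (e : Ed G) :
  (forall s, 0 < s < len e -> A (emb (edge_pt e s))) ->
  edge_trace A e = [set` `]0%R, len e[%R]%classic.
Proof.
  intros H. apply funext => s. apply propext.
  rewrite /edge_trace /= in_itv /=. split.
  - intros [[H1 H2] _]. apply/andP; split; apply/RltP; assumption.
  - move=> /andP [/RltP H1 /RltP H2]. split; [split; assumption|]. apply H. split; assumption.
Qed.

Section Descent.
Variable G : MGraph.
Hypothesis Hlen : pos_lengths G.
Hypothesis Hlf : locally_finite G.
Variable f : Gbar G -> R.
Hypothesis Hf : harmonic f.
Variable t : R.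

Variables (e0 : Ed G) (v0 : V G) (c0 sg0 l0 : R).
Hypothesis Hl0 : 0 < l0.
Hypothesis Hsg0 : sg0 = 1 \/ sg0 = -1.
Hypothesis Hc0 : forall u, 0 <= u <= l0 -> 0 <= c0 + sg0 * u <= len e0.
Hypothesis Hend0 : on_edge e0 (inl v0) (c0 + sg0 * l0).
Hypothesis Hup0 : exists e b, endpt e b = v0 /\ 0 < dnu f e b.
Hypothesis Hpiece0 : forall u, 0 <= u <= l0 -> f (emb (edge_pt e0 (c0 + sg0 * u))) <= t.

Definition down_end (v : V G) : Ed G * bool :=
  epsilon (inhabits (e0, true))
    (fun eb => endpt (fst eb) (snd eb) = v /\ dnu f (fst eb) (snd eb) < 0).

Fixpoint vtx (k : nat) : V G :=
  match k with
  | O => v0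
  | S j => if `[< Bd G (vtx j) >] then vtx j
           else endpt (fst (down_end (vtx j))) (negb (snd (down_end (vtx j))))
  end.

Lemma vtx_S_Bd k : Bd G (vtx k) -> vtx (S k) = vtx k.
Proof. intros H. simpl. rewrite (asboolT H). reflexivity. Qed.

Lemma vtx_S_interior k : ~ Bd G (vtx k) ->
  vtx (S k) = endpt (fst (down_end (vtx k))) (negb (snd (down_end (vtx k)))).
Proof. intros H. simpl. rewrite (asboolF H). reflexivity. Qed.

Lemma down_end_spec v : ~ Bd G v -> (exists e b, endpt e b = v /\ 0 < dnu f e b) ->
  endpt (fst (down_end v)) (snd (down_end v)) = v /\
  dnu f (fst (down_end v)) (snd (down_end v)) < 0.
Proof.
  intros Hv Hup. destruct (exists_descending_end Hf Hlf Hv Hup) as [e [b Hb]].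
  unfold down_end. apply epsilon_spec. exists (e, b). exact Hb.
Qed.

Lemma vtx_ascending_end k : exists e b, endpt e b = vtx k /\ 0 < dnu f e b.
Proof.
  induction k as [|k IH]; [exact Hup0|].
  destruct (EM (Bd G (vtx k))) as [H|H]; [rewrite (vtx_S_Bd H); exact IH|].
  destruct (down_end_spec H IH) as [_ Hneg]. rewrite (vtx_S_interior H).
  exists (fst (down_end (vtx k))), (negb (snd (down_end (vtx k)))).
  split; [reflexivity|]. rewrite dnu_negb. lra.
Qed.

Lemma vtx_down_end k : ~ Bd G (vtx k) ->
  endpt (fst (down_end (vtx k))) (snd (down_end (vtx k))) = vtx k /\
  dnu f (fst (down_end (vtx k))) (snd (down_end (vtx k))) < 0.
Proof. intros H. exact (down_end_spec H (vtx_ascending_end k)). Qed.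

Lemma fv_vtx_S_lt k : ~ Bd G (vtx k) -> fv f (vtx (S k)) < fv f (vtx k).
Proof.
  intros H. destruct (vtx_down_end H) as [Hv Hneg].
  rewrite (vtx_S_interior H). set (e := fst (down_end (vtx k))) in *.
  set (b := snd (down_end (vtx k))) in *. pose proof (Hlen e).
  assert (fv f (endpt e (negb b)) - fv f (endpt e b) = dnu f e b * len e)
    by (rewrite (dnu_fv Hlen); field; lra).
  rewrite <- Hv. nra.
Qed.

Lemma fv_vtx_S_le k : fv f (vtx (S k)) <= fv f (vtx k).
Proof.
  destruct (EM (Bd G (vtx k))) as [H|H]; [rewrite (vtx_S_Bd H); lra|].
  left. exact (fv_vtx_S_lt H).
Qed.

Lemma fv_vtx_le j k : (j <= k)%coq_nat -> fv f (vtx k) <= fv f (vtx j).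
Proof. induction 1 as [|k _ IH]; [lra|]. pose proof (fv_vtx_S_le k). lra. Qed.

Lemma fv_vtx_lt j k : (j < k)%coq_nat -> ~ Bd G (vtx j) -> fv f (vtx k) < fv f (vtx j).
Proof. intros Hjk Hj. pose proof (fv_vtx_S_lt Hj). pose proof (fv_vtx_le Hjk). lra. Qed.

Lemma fv_v0_le : fv f v0 <= t.
Proof.
  unfold fv. rewrite <- (edge_pt_on_edge Hlen Hend0). apply Hpiece0. lra.
Qed.

Lemma fv_vtx_le_level k : fv f (vtx k) <= t.
Proof. pose proof (fv_vtx_le (Nat.le_0_l k)). pose proof fv_v0_le. simpl in *. lra. Qed.

Lemma vtx_Bd_stable j k : (j <= k)%coq_nat -> Bd G (vtx j) -> vtx k = vtx j.
Proof.
  intros Hjk Hj. induction Hjk as [|k _ IH]; [reflexivity|].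
  assert (Hk : Bd G (vtx k)) by (rewrite IH; exact Hj).
  rewrite (vtx_S_Bd Hk). exact IH.
Qed.

Lemma vtx_interior_before j k : (j <= k)%coq_nat -> ~ Bd G (vtx k) -> ~ Bd G (vtx j).
Proof. intros Hjk Hk Hj. apply Hk. rewrite (vtx_Bd_stable Hjk Hj). exact Hj. Qed.

(* Piece [k] of the path runs along [seg_edge k] from coordinate [seg_start k]
   in direction [seg_dir k], over the parameter interval [brk k, brk (S k)];
   the pieces after a boundary vertex are degenerate, of length 0. *)
Definition seg_edge (k : nat) : Ed G :=
  match k with O => e0 | S j => fst (down_end (vtx j)) end.
Definition seg_start (k : nat) : R :=
  match k with O => c0 | S j => endpt_coord (fst (down_end (vtx j))) (snd (down_end (vtx j))) end.
Definition seg_dir (k : nat) : R :=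
  match k with O => sg0 | S j => if snd (down_end (vtx j)) then 1 else -1 end.
Definition seg_len (k : nat) : R :=
  match k with
  | O => l0
  | S j => if `[< Bd G (vtx j) >] then 0 else len (fst (down_end (vtx j)))
  end.
Fixpoint brk (k : nat) : R := match k with O => 0 | S j => brk j + seg_len j end.

Lemma seg_len_interior j : ~ Bd G (vtx j) -> seg_len (S j) = len (seg_edge (S j)).
Proof. intros H. simpl. rewrite (asboolF H). reflexivity. Qed.

Lemma seg_len_Bd j : Bd G (vtx j) -> seg_len (S j) = 0.
Proof. intros H. simpl. rewrite (asboolT H). reflexivity. Qed.

Lemma seg_len_ge0 k : 0 <= seg_len k.
Proof.
  destruct k as [|j]; [simpl; lra|].
  destruct (EM (Bd G (vtx j))) as [H|H]; [rewrite (seg_len_Bd H); lra|].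
  rewrite (seg_len_interior H). pose proof (Hlen (seg_edge (S j))). lra.
Qed.

Lemma seg_len_gt0 k : 0 < seg_len k -> k = O \/ exists j, k = S j /\ ~ Bd G (vtx j).
Proof.
  intros H. destruct k as [|j]; [left; reflexivity|]. right. exists j.
  split; [reflexivity|]. intros HB. rewrite (seg_len_Bd HB) in H. lra.
Qed.

Lemma seg_dir_sign k : seg_dir k = 1 \/ seg_dir k = -1.
Proof. destruct k as [|j]; [exact Hsg0|]. simpl. destruct (snd (down_end (vtx j))); auto. Qed.

Lemma brk_le j k : (j <= k)%coq_nat -> brk j <= brk k.
Proof. induction 1 as [|k _ IH]; [lra|]. simpl. pose proof (seg_len_ge0 k). lra. Qed.

Lemma brk_Bd n k : Bd G (vtx n) -> (S n <= k)%coq_nat -> brk k = brk (S n).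
Proof.
  intros Hn. induction 1 as [|k Hk IH]; [reflexivity|].
  destruct k as [|m]; [lia|].
  assert (Hm : Bd G (vtx m)) by (rewrite (vtx_Bd_stable (j := n) (k := m) ltac:(lia) Hn); exact Hn).
  change (brk (S (S m))) with (brk (S m) + seg_len (S m)).
  rewrite (seg_len_Bd Hm) IH. ring.
Qed.

Lemma seg_coord_range k u :
  0 <= u <= seg_len k -> 0 <= seg_start k + seg_dir k * u <= len (seg_edge k).
Proof.
  intros Hu. destruct k as [|j]; [exact (Hc0 Hu)|].
  pose proof (Hlen (seg_edge (S j))).
  destruct (EM (Bd G (vtx j))) as [HB|HB].
  - rewrite (seg_len_Bd HB) in Hu. replace u with 0 by lra.
    simpl in *. unfold endpt_coord. destruct (snd (down_end (vtx j))); lra.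
  - rewrite (seg_len_interior HB) in Hu.
    simpl in *. unfold endpt_coord. destruct (snd (down_end (vtx j))); lra.
Qed.

Lemma seg_start_on j : ~ Bd G (vtx j) ->
  on_edge (seg_edge (S j)) (inl (vtx j)) (seg_start (S j)).
Proof.
  intros H. destruct (vtx_down_end H) as [Hv _]. simpl.
  pose proof (on_edge_endpt (fst (down_end (vtx j))) (snd (down_end (vtx j)))) as Hon.
  rewrite Hv in Hon. exact Hon.
Qed.

Lemma seg_end_on k : 0 < seg_len k ->
  on_edge (seg_edge k) (inl (vtx k)) (seg_start k + seg_dir k * seg_len k).
Proof.
  intros Hk. destruct (seg_len_gt0 Hk) as [->|[j [-> Hj]]]; [exact Hend0|].
  rewrite (seg_len_interior Hj) (vtx_S_interior Hj). simpl.
  eapply on_edge_coord_eq; [apply on_edge_endpt|].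
  unfold endpt_coord. destruct (snd (down_end (vtx j))); simpl; ring.
Qed.

Lemma chain_vtx j n : (j <= n)%coq_nat ->
  chain (inl (vtx j)) (inl (vtx n)) (brk (S n) - brk (S j)).
Proof.
  induction 1 as [|n Hjn IH]; [apply (chain_eq_len (chain_nil _)); ring|].
  change (brk (S (S n))) with (brk (S n) + seg_len (S n)).
  destruct (EM (Bd G (vtx n))) as [HB|HB].
  - rewrite (vtx_S_Bd HB) (seg_len_Bd HB). apply (chain_eq_len IH). ring.
  - assert (Hpos : 0 < seg_len (S n))
      by (rewrite (seg_len_interior HB); apply Hlen).
    apply (chain_eq_len (chain_trans IH (chain_edge (seg_start_on HB) (seg_end_on Hpos)))).
    replace (seg_start (S n) - (seg_start (S n) + seg_dir (S n) * seg_len (S n)))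
      with (- (seg_dir (S n) * seg_len (S n))) by ring.
    rewrite Rabs_Ropp (Rabs_sign_mul _ (seg_dir_sign (S n))) Rabs_right; lra.
Qed.

Lemma seg_edge_max_fv j : ~ Bd G (vtx j) ->
  Rmax (fv f (src (seg_edge (S j)))) (fv f (tgt (seg_edge (S j)))) = fv f (vtx j).
Proof.
  intros H. pose proof (fv_vtx_S_lt H) as Hlt. destruct (vtx_down_end H) as [Hv _].
  rewrite (vtx_S_interior H) in Hlt. simpl.
  destruct (snd (down_end (vtx j))); simpl in Hv, Hlt |- *; rewrite Hv.
  - apply Rmax_left. lra.
  - apply Rmax_right. lra.
Qed.

(* The maximum of f on a full piece is attained at its starting vertex, and
   these values strictly decrease. *)
Lemma seg_edge_inj j k : (j < k)%coq_nat -> ~ Bd G (vtx k) -> seg_edge (S j) <> seg_edge (S k).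
Proof.
  intros Hjk Hk E.
  assert (Hj : ~ Bd G (vtx j)) by exact (vtx_interior_before (Nat.lt_le_incl _ _ Hjk) Hk).
  pose proof (seg_edge_max_fv Hj) as M1. pose proof (seg_edge_max_fv Hk) as M2.
  rewrite E in M1. pose proof (fv_vtx_lt Hjk Hj). lra.
Qed.

Lemma seg_le_level k u : 0 < seg_len k -> 0 <= u <= seg_len k ->
  f (emb (edge_pt (seg_edge k) (seg_start k + seg_dir k * u))) <= t.
Proof.
  intros Hk Hu. destruct (seg_len_gt0 Hk) as [->|[j [-> Hj]]]; [exact (Hpiece0 Hu)|].
  pose proof (f_edge_le_max Hlen Hf (seg_coord_range Hu)) as Hmax.
  rewrite (seg_edge_max_fv Hj) in Hmax. pose proof (fv_vtx_le_level j). lra.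
Qed.

Definition descent_path (s : R) : Pt G :=
  let k := epsilon (inhabits 0%nat) (fun k => brk k <= s < brk (S k)) in
  edge_pt (seg_edge k) (seg_start k + seg_dir k * (s - brk k)).

Lemma descent_path_eq k s : brk k <= s < brk (S k) ->
  descent_path s = edge_pt (seg_edge k) (seg_start k + seg_dir k * (s - brk k)).
Proof.
  intros Hk. unfold descent_path.
  assert (Hs := epsilon_spec (inhabits 0%nat) (fun k => brk k <= s < brk (S k)) (ex_intro _ k Hk)).
  set (k' := epsilon (inhabits 0%nat) (fun k => brk k <= s < brk (S k))) in *.
  enough (k' = k) as -> by reflexivity.
  destruct (Nat.lt_trichotomy k' k) as [h|[h|h]]; [|exact h|].
  - pose proof (brk_le h). lra.
  - pose proof (brk_le h). lra.
Qed.

Lemma chain_descent_path_vtx k s n : brk k <= s < brk (S k) -> (k <= n)%coq_nat ->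
  chain (descent_path s) (inl (vtx n)) (brk (S n) - s).
Proof.
  intros Hk Hkn. rewrite (descent_path_eq Hk). simpl in Hk.
  assert (Hpos : 0 < seg_len k) by lra.
  assert (Hu : 0 <= s - brk k <= seg_len k) by lra.
  pose proof (chain_edge (on_edge_edge_pt (seg_coord_range Hu)) (seg_end_on Hpos)) as H1.
  apply (chain_eq_len (chain_trans H1 (chain_vtx Hkn))).
  replace (seg_start k + seg_dir k * (s - brk k) - (seg_start k + seg_dir k * seg_len k))
    with (seg_dir k * (s - brk k - seg_len k)) by ring.
  rewrite (Rabs_sign_mul _ (seg_dir_sign k)) Rabs_left1; simpl; lra.
Qed.

Fixpoint seg_edges (K : nat) : list (Ed G) :=
  match K with O => nil | S K' => seg_edge (S K') :: seg_edges K' end.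

Lemma in_seg_edges K e : In e (seg_edges K) -> exists j, (j < K)%coq_nat /\ e = seg_edge (S j).
Proof.
  induction K as [|K IH]; [intros []|].
  intros [<-|H]; [exists K; split; [lia|reflexivity]|].
  destruct (IH H) as [j [Hj ->]]. exists j. split; [lia|reflexivity].
Qed.

Section Volume.
Variable A : Gbar G -> Prop.
Hypothesis HA : forall u, IsCS u -> f u <= t -> A u.
Hypothesis Hinterior : forall j, ~ Bd G (vtx j).

Lemma seg_edges_NoDup K : NoDup (seg_edges K).
Proof.
  induction K as [|K IH]; constructor; [|exact IH].
  intros Hin. destruct (in_seg_edges Hin) as [j [Hj E]].
  exact (seg_edge_inj Hj (@Hinterior K) (Logic.eq_sym E)).
Qed.

Lemma seg_edges_measure K :
  (\sum_(e <- seg_edges K) (@lebesgue_measure R (edge_trace A e)))%E = (brk (S K) - l0)%:E.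
Proof.
  induction K as [|K IH].
  - rewrite big_nil. assert (H : brk 1 - l0 = 0) by (simpl; ring).
    exact (Logic.eq_sym (f_equal EFin H)).
  - simpl seg_edges. rewrite big_cons IH.
    assert (Hlen' : len (seg_edge (S K)) = seg_len (S K))
      by (rewrite (seg_len_interior (@Hinterior K)); reflexivity).
    rewrite (edge_trace_full (A := A) (e := seg_edge (S K))).
    + rewrite (lebesgue_measure_oo0 (Hlen _)) -EFinD Hlen'. apply f_equal.
      assert (H : seg_len (S K) + (brk (S K) - l0) = brk (S (S K)) - l0) by (simpl; ring).
      exact H.
    + intros s Hs. apply HA; [apply emb_IsCS|].
      assert (Hs' : 0 <= s <= len (seg_edge (S K))) by lra.
      pose proof (f_edge_le_max Hlen Hf Hs') as Hmax.
      rewrite (seg_edge_max_fv (@Hinterior K)) in Hmax. pose proof (fv_vtx_le_level K). lra.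
Qed.

Lemma brk_bounded_interior : finite_volume A -> exists B, forall K, brk K <= B.
Proof.
  intros [M HM]. exists (l0 + M). intros K.
  pose proof (brk_le (Nat.le_succ_diag_r K)).
  pose proof (HM _ (seg_edges_NoDup K)) as Hvol.
  rewrite seg_edges_measure lee_fin in Hvol.
  move/RleP: Hvol => Hvol. rewrite -RminusE in Hvol. lra.
Qed.

End Volume.

Variable A : Gbar G -> Prop.
Hypothesis HA : forall u, IsCS u -> f u <= t -> A u.
Hypothesis HvolA : finite_volume A.

Lemma brk_growing : Un_growing brk.
Proof. intros k. apply brk_le. lia. Qed.

(* Either the walk stops at a boundary vertex, or its edges are pairwise
   distinct and contained in the sublevel set, whose volume is finite. *)
Lemma brk_has_ub : has_ub brk.
Proof.
  destruct (EM (exists n, Bd G (vtx n))) as [[n Hn]|Hnone].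
  - exists (brk (S n)). intros x [k ->].
    destruct (Nat.le_gt_cases k (S n)) as [h|h]; [exact (brk_le h)|].
    rewrite (brk_Bd Hn (k := k)); [lra|lia].
  - assert (Hint : forall j, ~ Bd G (vtx j)) by (intros j Hj; apply Hnone; exists j; exact Hj).
    destruct (brk_bounded_interior HA Hint HvolA) as [B HB].
    exists B. intros x [k ->]. apply HB.
Qed.

Definition total_len : R := proj1_sig (growing_cv brk brk_growing brk_has_ub).

Lemma brk_cv : Un_cv brk total_len.
Proof. exact (proj2_sig (growing_cv brk brk_growing brk_has_ub)). Qed.

Lemma brk_le_total k : brk k <= total_len.
Proof. exact (growing_ineq brk total_len brk_growing brk_cv k). Qed.

Lemma total_len_gt0 : 0 < total_len.
Proof. pose proof (brk_le_total 1) as H. simpl in H. lra. Qed.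

Lemma brk_Bd_total n : Bd G (vtx n) -> brk (S n) = total_len.
Proof.
  intros Hn. apply (UL_sequence brk); [|exact brk_cv].
  intros eps Heps. exists (S n). intros k Hk. unfold R_dist.
  rewrite (brk_Bd Hn (k := k)); [|lia]. rewrite Rminus_diag Rabs_R0. exact Heps.
Qed.

Lemma total_len_sub_brk eps : 0 < eps ->
  exists N, forall n, (N <= n)%coq_nat -> total_len - brk n < eps.
Proof.
  intros Heps. destruct (brk_cv Heps) as [N HN]. exists N. intros n Hn.
  specialize (HN n Hn). unfold R_dist in HN. pose proof (brk_le_total n).
  rewrite Rabs_left1 in HN; lra.
Qed.

Lemma exists_piece s : 0 <= s < total_len -> exists k, brk k <= s < brk (S k).
Proof.
  intros Hs. destruct (total_len_sub_brk (eps := total_len - s) ltac:(lra)) as [N HN].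
  assert (HsN : s < brk N) by (pose proof (HN N (le_n N)); lra). clear HN.
  induction N as [|N IH]; [simpl in HsN; lra|].
  destruct (Rlt_or_le s (brk N)) as [h|h]; [exact (IH h)|]. exists N. split; assumption.
Qed.

Lemma descent_path_0 : descent_path 0 = edge_pt e0 c0.
Proof. rewrite (descent_path_eq (k := 0)); [|simpl; lra]. simpl. f_equal. ring. Qed.

Lemma descent_path_le_level s : 0 <= s < total_len -> f (emb (descent_path s)) <= t.
Proof.
  intros Hs. destruct (exists_piece Hs) as [k Hk]. rewrite (descent_path_eq Hk).
  simpl in Hk. apply seg_le_level; lra.
Qed.

Lemma descent_path_on_seg k s : brk k <= s <= brk (S k) -> s < total_len ->
  on_edge (seg_edge k) (descent_path s) (seg_start k + seg_dir k * (s - brk k)).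
Proof.
  intros Hs HsL. destruct (Rlt_or_le s (brk (S k))) as [h|h].
  - rewrite (descent_path_eq (conj (proj1 Hs) h)).
    apply on_edge_edge_pt, seg_coord_range. simpl in *. lra.
  - replace s with (brk (S k)) in * by lra.
    assert (Hk : ~ Bd G (vtx k)) by (intros HB; rewrite (brk_Bd_total HB) in HsL; lra).
    assert (Hnext : brk (S k) <= brk (S k) < brk (S (S k))).
    { change (brk (S (S k))) with (brk (S k) + seg_len (S k)).
      rewrite (seg_len_interior Hk). pose proof (Hlen (seg_edge (S k))). lra. }
    rewrite (descent_path_eq Hnext) Rminus_diag Rmult_0_r Rplus_0_r.
    rewrite (edge_pt_on_edge Hlen (seg_start_on Hk)).
    assert (Hpos : 0 < seg_len k).
    { destruct k as [|m]; [simpl; lra|].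
      rewrite (seg_len_interior (vtx_interior_before (Nat.le_succ_diag_r m) Hk)). apply Hlen. }
    apply (on_edge_coord_eq (seg_end_on Hpos)). simpl. ring.
Qed.

Lemma brk_stops_or_cv :
  (exists n, forall k, (n <= k)%N -> brk k = total_len) \/
  ((forall k, brk k < total_len) /\ Un_cv brk total_len).
Proof.
  destruct (EM (exists n, Bd G (vtx n))) as [[n Hn]|Hnone]; [left|right].
  - exists (S n). intros k Hk. rewrite (brk_Bd Hn); [exact (brk_Bd_total Hn)|lia].
  - split; [|exact brk_cv]. intros k.
    assert (Hk : 0 < seg_len k).
    { destruct k as [|j]; [simpl; lra|].
      rewrite (seg_len_interior (fun H => Hnone (ex_intro _ j H))). apply Hlen. }
    pose proof (brk_le_total (S k)). simpl in *. lra.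
Qed.

Lemma descent_is_path : is_path (edge_pt e0 c0) descent_path total_len.
Proof.
  split; [exact total_len_gt0|]. split; [exact descent_path_0|].
  exists brk, seg_edge, seg_start, seg_dir.
  split; [reflexivity|]. split; [exact brk_growing|]. split; [exact brk_stops_or_cv|].
  intros k. split; [exact (seg_dir_sign k)|]. intros s Hs HsL. exact (descent_path_on_seg Hs HsL).
Qed.

Definition descent_limit : Gbar G := fun n => inl (vtx n).

Lemma descent_limit_IsCS : IsCS descent_limit.
Proof.
  intros eps Heps. destruct (total_len_sub_brk Heps) as [N HN]. exists N. intros m n Hm Hn.
  assert (Hfwd : forall a b, (N <= a)%coq_nat -> (a <= b)%coq_nat ->
                   dlt (inl (vtx a)) (inl (vtx b)) eps).
  { intros a b Ha Hab. exists (brk (S b) - brk (S a)). split; [exact (chain_vtx Hab)|].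
    pose proof (brk_le_total (S b)). pose proof (brk_le (j := N) (k := S a) ltac:(lia)).
    pose proof (HN N (le_n N)). lra. }
  unfold descent_limit. destruct (Nat.le_ge_cases m n) as [h|h].
  - apply Hfwd; [lia|exact h].
  - destruct (Hfwd n m ltac:(lia) h) as [c [Hc Hce]].
    exists c. split; [exact (chain_sym Hc)|exact Hce].
Qed.

Lemma Dlt_descent_limit s eps : 0 <= s < total_len -> total_len - s < eps ->
  Dlt (emb (descent_path s)) descent_limit eps.
Proof.
  intros Hs Heps. destruct (exists_piece Hs) as [k Hk].
  exists ((total_len - s + eps) / 2). split; [lra|]. exists k. intros n Hn.
  exists (brk (S n) - s). split; [exact (chain_descent_path_vtx (n := n) Hk ltac:(lia))|].
  pose proof (brk_le_total (S n)). lra.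
Qed.

Lemma descent_limit_limpt : path_limpt descent_path total_len descent_limit.
Proof.
  split; [exact descent_limit_IsCS|].
  destruct (cv_from_below total_len_gt0) as [sq [Hsq Hcv]].
  exists sq. split; [exact Hsq|]. split; [exact Hcv|].
  intros eps Heps. destruct (Hcv eps Heps) as [N HN]. exists N. intros k Hk.
  apply (Dlt_descent_limit (Hsq k)). specialize (HN k ltac:(lia)).
  unfold R_dist in HN. pose proof (Hsq k). rewrite Rabs_left1 in HN; lra.
Qed.

(* An interior point has no other vertex nearby, while the walk never stays
   at an interior vertex. *)
Lemma descent_limit_bdry : bdry descent_limit.
Proof.
  split; [exact descent_limit_IsCS|]. intros [y [Hy HD]].
  destruct (near_vertices_eq Hlen Hlf y) as [r [Hr Hnear]].
  destruct (HD r Hr) as [r' [Hr' [N HN]]].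
  assert (Hy_vtx : forall n, (N <= n)%N -> y = inl (vtx n)).
  { intros n Hn. destruct (HN n Hn) as [c [Hc Hcr]]. apply (Hnear (vtx n) c Hc). lra. }
  pose proof (Hy_vtx N (leqnn N)) as E1. pose proof (Hy_vtx (S N) (leqnSn N)) as E2.
  assert (Hstay : vtx (S N) = vtx N) by congruence.
  rewrite E1 in Hy. pose proof (fv_vtx_S_lt Hy) as Hlt. rewrite Hstay in Hlt. lra.
Qed.

Lemma descent_limit_unique q : path_limpt descent_path total_len q -> Deq0 descent_limit q.
Proof.
  intros [_ [sq [Hsq [Hcv Hnear]]]] eps Heps.
  destruct (Hnear (eps / 2) ltac:(lra)) as [K1 HK1].
  destruct (Hcv (eps / 2) ltac:(lra)) as [K2 HK2].
  pose proof (HK2 (Nat.max K1 K2) ltac:(lia)) as Hk2. unfold R_dist in Hk2.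
  destruct (HK1 (Nat.max K1 K2) ltac:(lia)) as [r [Hr [N HN]]].
  set (s := sq (Nat.max K1 K2)) in *.
  assert (Hs : 0 <= s < total_len) by apply Hsq. destruct (exists_piece Hs) as [j Hj].
  rewrite Rabs_left1 in Hk2; [|lra].
  exists (total_len - s + r). split; [lra|].
  exists (Nat.max N j). intros n Hn.
  apply (chain_dlt_trans (y := descent_path s) (c := brk (S n) - s)).
  - apply chain_sym. apply (chain_descent_path_vtx Hj). lia.
  - pose proof (brk_le_total (S n)). lra.
  - apply HN. lia.
Qed.

Lemma descent_from_edge_point : sublevel_path_to_boundary f t (edge_pt e0 c0).
Proof.
  exists descent_path, total_len.
  split; [exact descent_is_path|]. split; [exact descent_path_le_level|].
  exists descent_limit. split; [exact descent_limit_bdry|].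
  split; [exact descent_limit_limpt|exact descent_limit_unique].
Qed.

End Descent.

Lemma regular_level_point_descent (G : MGraph) (Hlen : pos_lengths G)
  (Hlf : locally_finite G) (f : Gbar G -> R) (Hf : harmonic f) (t : R)
  (A : Gbar G -> Prop) (HA : forall u, IsCS u -> f u <= t -> A u)
  (HvolA : finite_volume A) (Hreg : ~ critical_value f t) (x : Pt G) :
  f (emb x) = t -> sublevel_path_to_boundary f t x.
Proof.
  intros Hx. destruct x as [v|p].
  { exfalso. apply Hreg. exists (inl v). split; [exact I|exact Hx]. }
  rewrite <- (edge_pt_inr p) in Hx |- *.
  set (e := fst (proj1_sig p)) in *. set (s0 := snd (proj1_sig p)) in *.
  assert (Hs0 : 0 < s0 < len e) by exact (proj2_sig p).
  set (B := edge_slope f e).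
  assert (Hval : forall u, 0 <= u <= len e -> f (emb (edge_pt e u)) = t + B * (u - s0)).
  { intros u Hu. rewrite <- Hx.
    change (f_edge f e u = f_edge f e s0 + B * (u - s0)).
    assert (Hs0' : 0 <= s0 <= len e) by lra.
    rewrite (f_edge_affine Hlen Hf Hu) (f_edge_affine Hlen Hf Hs0').
    unfold B. ring. }
  destruct (Rtotal_order B 0) as [Hneg|[Hzero|Hpos]].
  - eapply (descent_from_edge_point (v0 := tgt e) (sg0 := 1) (l0 := len e - s0)
             Hlen Hlf Hf); [| | | | | |exact HA|exact HvolA].
    + lra.
    + left; reflexivity.
    + intros u Hu. lra.
    + apply (on_edge_coord_eq (on_edge_endpt e false)). simpl. ring.
    + exists e, false. split; [reflexivity|]. unfold dnu. fold B. lra.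
    + intros u Hu. rewrite Hval; [nra|lra].
  - exfalso. apply Hreg. exists (inr p). split; [|rewrite <- (edge_pt_inr p); exact Hx].
    simpl. fold e s0. rewrite <- Hzero. exact (f_edge_derivable Hlen Hf Hs0).
  - eapply (descent_from_edge_point (v0 := src e) (sg0 := -1) (l0 := s0)
             Hlen Hlf Hf); [| | | | | |exact HA|exact HvolA].
    + lra.
    + right; reflexivity.
    + intros u Hu. lra.
    + apply (on_edge_coord_eq (on_edge_endpt e true)). simpl. ring.
    + exists e, true. split; [reflexivity|]. unfold dnu. fold B. lra.
    + intros u Hu. rewrite Hval; [nra|lra].
Qed.

Theorem proposition3p11
  (G : MGraph)
  (* standing assumptions on the metric graph *)
  (Hlen : pos_lengths G) (Hcount : countable_graph G)
  (Hlf : locally_finite G) (Hconn : connected_graph G)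
  (Hleaves : Bd_contains_leaves G)
  (Hcompact : compact_Gbar G) (Htd : bdry_totally_disconnected G)
  (* E and E^c nonempty clopen subsets of dGbar *)
  (E : Gbar G -> Prop) (HE : clopen_bdry E)
  (HEne : exists u, E u) (HEcne : exists u, bdry u /\ ~ E u)
  (* f harmonic, = C on E, > C on E^c *)
  (f : Gbar G -> R) (Hf : harmonic f) (C : R) (HC : 0 <= C)
  (HfE : forall u, E u -> f u = C)
  (HfEc : forall u, bdry u -> ~ E u -> f u > C)
  (eps : R) (Heps : 0 < eps) (Hvol : finite_volume (Neps E eps))
  (t : R) (Ht : regular_value f t) (HCt : C < t)
  (Htmin : exists m, (exists u, bdry u /\ ~ E u /\ f u = m) /\
                     (forall u, bdry u -> ~ E u -> m <= f u) /\ t < m)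
  (Hsub : forall u, IsCS u -> f u <= t -> Neps E eps u) :
  forall x : Pt G, f (emb x) = t ->
    exists (gamma : R -> Pt G) (L : R),
      is_path x gamma L /\
      (forall s, 0 <= s < L -> f (emb (gamma s)) <= t) /\
      exists p : Gbar G, bdry p /\ path_limpt gamma L p /\
        (forall q, path_limpt gamma L q -> Deq0 p q).
Proof.
  intros x Hx.
  exact (regular_level_point_descent Hlen Hlf Hf Hsub Hvol (proj2 Ht) Hx).
Qed.
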